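(* Let $P$ be a finite poset with a canonical labeling $\omega$ such that $P$ is $\omega$-consistent and saturated. Then there are antichains $A_0,A_1,\dots,A_k$ such that $$(P,\omega)=A_0\oplus_1A_1\oplus_{-1}A_2\oplus_1A_3\oplus_{-1}\cdots\oplus_{\pm1}A_k,$$ i.e. $P$ is the ordinal sum $A_0\oplus A_1\oplus\cdots\oplus A_k$ and, for each covering relation $x\prec y$ with $x\in A_{i}$, $y\in A_{i+1}$, the induced label is $\epsilon(x,y)=1$ if $i$ is even and $\epsilon(x,y)=-1$ if $i$ is odd.
   Context: Write $x\prec y$ if $y$ covers $x$; a labeling $\omega:P\to\{1,\dots,p\}$ induces $\epsilon(x,y)=1$ if $\omega(x)<\omega(y)$ and $-1$ otherwise on covering pairs. $P$ is $\omega$-consistent if for each $z$ the sum $\sum\epsilon(x_{i-1},x_i)$ is the same over all maximal chains $x_0\prec\cdots\prec x_n$ of $\Lambda_z=\{w\le z\}$; that value is the rank $\rho(z)$. $\omega$ is canonical if $P$ is $\omega$-consistent with rank function taking values in $\{0,1\}$ and $\rho(x)<\rho(y)$ implies $\omega(x)<\omega(y)$. $P$ is saturated if any $x,y$ with $|\rho(x)-\rho(y)|=1$ are comparable. The ordinal sum $P\oplus Q$ of posets has underlying set the disjoint union, with $x\le y$ iff $x\le_P y$, or $x\le_Q y$, or $x\in P,y\in Q$; the labeling $\epsilon\oplus_{1}\mu$ (resp. $\epsilon\oplus_{-1}\mu$) of $E(P\oplus Q)$ agrees with $\epsilon$ on $E(P)$, with $\mu$ on $E(Q)$, and equals $1$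 (resp. $-1$) on the remaining covering pairs (from maximal elements of $P$ to minimal elements of $Q$). Ordinal sums are associative. *)

From HB Require Import structures.
From mathcomp Require Import all_boot all_order all_algebra.
Set Implicit Arguments. Unset Strict Implicit. Unset Printing Implicit Defensive.
Import Order.Theory GRing.Theory Num.Theory.

Definition covers (d : Order.disp_t) (T : finPOrderType d) (x y : T) : bool :=
  ((x < y) && [forall z : T, ~~ ((x < z) && (z < y))])%O.

(* labeling omega : P -> {1,...,p}, a bijection *)
Definition labeling (T : finType) (w : T -> nat) : Prop :=
  injective w /\ (forall x, 1 <= w x <= #|T|)%N.

Definition eps (T : Type) (w : T -> nat) (x y : T) : int :=
  if (w x < w y)%N then 1%R else (-1)%R.

(* sum of epsilon along the chain x0, x1, ..., xn (s = [x1;...;xn]) *)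
Definition chain_sum (T : Type) (w : T -> nat) (x0 : T) (s : seq T) : int :=
  (\sum_(e <- pairmap (eps w) x0 s) e)%R.

(* x0 ≺ x1 ≺ ... ≺ xn is a maximal chain of Lambda_z = {w <= z}:
   x0 minimal, consecutive covering relations, and xn = z. *)
Definition max_chain_to (d : Order.disp_t) (T : finPOrderType d)
    (x0 : T) (s : seq T) (z : T) : bool :=
  [forall y : T, ~~ (y < x0)%O] && path (@covers d T) x0 s && (last x0 s == z).

Definition is_rank (d : Order.disp_t) (T : finPOrderType d)
    (w : T -> nat) (rho : T -> int) : Prop :=
  forall (x0 : T) (s : seq T) (z : T),
    max_chain_to x0 s z -> chain_sum w x0 s = rho z.

Definition consistent (d : Order.disp_t) (T : finPOrderType d) (w : T -> nat) : Prop :=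
  exists rho : T -> int, is_rank w rho.

Definition canonical_with_rank (d : Order.disp_t) (T : finPOrderType d)
    (w : T -> nat) (rho : T -> int) : Prop :=
  is_rank w rho /\ (forall z, rho z = 0%R \/ rho z = 1%R) /\
  (forall x y, (rho x < rho y)%R -> (w x < w y)%N).

Definition saturated (d : Order.disp_t) (T : finPOrderType d) (rho : T -> int) : Prop :=
  forall x y : T, `|rho x - rho y|%R = 1%R -> (x >=< y)%O.

From HB Require Import structures.
From mathcomp Require Import all_boot all_order all_algebra.
From mathcomp Require Import zify.
Set Implicit Arguments. Unset Strict Implicit. Unset Printing Implicit Defensive.
Import Order.Theory GRing.Theory Num.Theory.

(* Along a covering x ≺ y the rank grows by ε(x,y); as it only takes the values
   0 and 1, every covering flips the rank, and ε(x,y) = 1 exactly when ρ(x) = 0.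
   Saturation then makes incomparable elements x, y have the same strict
   down-set: for u < x pick c with u ≤ c ≺ x; then ρ(c) ≠ ρ(x) = ρ(y), so c is
   comparable with y, and c < x forces c < y.  Hence P is a weak order: its
   levels, indexed by the number of distinct down-sets below an element, are
   antichains stacked by ordinal sum, consecutive levels are one covering apart,
   and ρ is the parity of the level. *)

Section Poset.
Variables (d : Order.disp_t) (T : finPOrderType d).

Definition down (x : T) : {set T} := [set y | (y < x)%O].

(* In a weak order this is the index of the antichain containing [x]. *)
Definition level (x : T) : nat := #|[set down y | y in down x]|.

Lemma covers_lt (x y : T) : covers x y -> (x < y)%O.
Proof. by case/andP. Qed.

Lemma down_proper (x y : T) : (x < y)%O -> down x \proper down y.
Proof.
move=> xy; apply/properP; split.
  by apply/subsetP => z; rewrite !inE => /lt_trans; apply.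
by exists x; rewrite !inE ?xy ?ltxx.
Qed.

Lemma cover_below (u x : T) : (u < x)%O -> exists2 c, (u <= c)%O & covers c x.
Proof.
move=> ux.
have [|c /andP[uc cx] cmax] :=
  @arg_maxnP T u [pred c | (u <= c) && (c < x)]%O (fun c => #|down c|).
  by rewrite /= lexx ux.
exists c => //; rewrite /covers cx; apply/forallP => z.
apply/negP => /andP[cz zx].
have /cmax : ((u <= z) && (z < x))%O by rewrite (le_trans uc (ltW cz)) zx.
by rewrite /= leqNgt proper_card ?down_proper.
Qed.

Lemma covered_or_minimal (x : T) :
  (exists c, covers c x) \/ [forall y, ~~ (y < x)%O].
Proof.
case: (boolP [forall y, ~~ (y < x)%O]) => [|/forallPn [y]]; first by right.
by rewrite negbK => /cover_below [c _ cx]; left; exists c.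
Qed.

Lemma max_chain_to_rcons (x0 x y : T) (s : seq T) :
  max_chain_to x0 s x -> covers x y -> max_chain_to x0 (rcons s y) y.
Proof.
case/andP=> [/andP[x0min chain] /eqP lastx] xy.
by rewrite /max_chain_to x0min rcons_path chain lastx xy last_rcons eqxx.
Qed.

Lemma exists_max_chain (x : T) : exists x0 s, max_chain_to x0 s x.
Proof.
have [n] := ubnP #|down x|; elim: n x => // n IH x /ltnSE ltx.
have [[c cx] | xmin] := covered_or_minimal x.
  have [x0 [s chain]] : exists x0 s, max_chain_to x0 s c.
    by apply: IH; apply: leq_trans ltx; rewrite proper_card ?down_proper ?covers_lt.
  by exists x0, (rcons s x); apply: max_chain_to_rcons chain cx.
by exists x, [::]; rewrite /max_chain_to xmin eqxx.
Qed.

Lemma down_notin_image (x : T) : down x \notin [set down y | y in down x].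
Proof. by apply/imsetP => -[y]; rewrite inE => /down_proper/proper_neq/eqP yx /esym. Qed.

Lemma level_homo : {homo level : x y / (x < y)%O >-> (x < y)%N}.
Proof.
move=> x y xy; apply: proper_card; apply/properP; split.
  by apply/imsetS/proper_sub/down_proper.
exists (down x); first by apply: imset_f; rewrite inE.
exact: down_notin_image.
Qed.

Lemma level_eq0 (x : T) : (level x == 0) = [forall y, ~~ (y < x)%O].
Proof.
rewrite cards_eq0 imset_eq0; apply/eqP/forallP => [x0 y | xmin].
  by apply/negP => yx; have /setP /(_ y) := x0; rewrite !inE yx.
by apply/setP => y; rewrite !inE; apply/negbTE.
Qed.

Section WeakOrder.
Hypothesis incomparable_down_eq :
  forall x y : T, ~~ (x >=< y)%O -> down x = down y.

Lemma down_image_cover (c x : T) : covers c x ->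
  [set down z | z in down x] = down c |: [set down z | z in down c].
Proof.
move=> cx; apply/eqP; rewrite eqEsubset subUset sub1set; apply/and3P; split.
- apply/subsetP => _ /imsetP[z + ->]; rewrite inE => zx.
  rewrite in_setU1; case: (boolP (z >=< c)%O) => [|nzc].
    case/comparable_ltgtP => [zc|cz|->]; rewrite ?eqxx //.
      by rewrite imset_f ?orbT ?inE.
    by move: cx => /andP[_ /forallP /(_ z)]; rewrite cz zx.
  by rewrite (incomparable_down_eq nzc) eqxx.
- by apply: imset_f; rewrite inE covers_lt.
- by apply/imsetS/proper_sub/down_proper/covers_lt.
Qed.

Lemma level_cover (c x : T) : covers c x -> level x = (level c).+1.
Proof.
by move=> cx; rewrite /level (down_image_cover cx) cardsU1 down_notin_image.
Qed.

Lemma level_pred (x : T) :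
  (0 < level x)%N -> exists2 c, covers c x & level x = (level c).+1.
Proof.
rewrite lt0n level_eq0 => xmin.
have [[c cx] | xmin'] := covered_or_minimal x; last by rewrite xmin' in xmin.
by exists c => //; apply: level_cover.
Qed.

Lemma ltn_level (x y : T) : (level x < level y)%N = (x < y)%O.
Proof.
apply/idP/idP => [lt|]; last exact: level_homo.
case: (boolP (x >=< y)%O) => [|xy]; last first.
  by move: lt; rewrite /level (incomparable_down_eq xy) ltnn.
case/comparable_ltgtP => // [yx|exy]; last by rewrite exy ltnn in lt.
by have := level_homo yx; rewrite ltnNge (ltnW lt).
Qed.

Lemma level_surj (x : T) (i : nat) : (i <= level x)%N -> exists y, level y = i.
Proof.
move=> /subnK; move: (level x - i)%N => n.
elim: n x => [|n IH] x lx; first by exists x.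
have [|c _ lc] := level_pred (x := x); first lia.
by apply: (IH c); move: lx; rewrite lc; lia.
Qed.

End WeakOrder.
End Poset.

Section CanonicalSaturated.
Variables (d : Order.disp_t) (T : finPOrderType d) (w : T -> nat) (rho : T -> int).
Hypothesis rank : is_rank w rho.
Hypothesis rank01 : forall z, rho z = 0%R \/ rho z = 1%R.
Hypothesis sat : saturated rho.

Lemma rank_min (x : T) : [forall y, ~~ (y < x)%O] -> rho x = 0%R.
Proof.
move=> xmin; have chain : max_chain_to x [::] x by rewrite /max_chain_to xmin eqxx.
by rewrite -(rank chain) /chain_sum big_nil.
Qed.

Lemma rank_cover (x y : T) : covers x y -> rho y = (rho x + eps w x y)%R.
Proof.
move=> xy; have [x0 [s chain]] := exists_max_chain x.
rewrite -(rank (max_chain_to_rcons chain xy)) -(rank chain).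
rewrite /chain_sum -cats1 pairmap_cat big_cat /= big_seq1.
by case/andP: chain => _ /eqP ->.
Qed.

Lemma eps_cover (x y : T) : covers x y -> eps w x y = (1 - 2 * rho x)%R.
Proof.
move/rank_cover; rewrite /eps; case: ifP => _;
  by case: (rank01 x) => ->; case: (rank01 y) => ->; lia.
Qed.

Lemma rank_cover_flip (x y : T) : covers x y -> rho y = (1 - rho x)%R.
Proof. by move=> xy; rewrite (rank_cover xy) (eps_cover xy); lia. Qed.

Lemma rank_neq_comparable (x y : T) : rho x != rho y -> (x >=< y)%O.
Proof.
by move=> ne; apply: sat; move: ne; case: (rank01 x) => ->; case: (rank01 y) => ->.
Qed.

Lemma incomparable_lt (x y u : T) : ~~ (x >=< y)%O -> (u < x)%O -> (u < y)%O.
Proof.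
move=> xy ux; have [c uc cx] := cover_below ux.
have xy_rank : rho x = rho y.
  by apply/eqP; apply: contraNT xy; apply: rank_neq_comparable.
have : (c >=< y)%O.
  by apply: rank_neq_comparable; rewrite -xy_rank (rank_cover_flip cx); lia.
case/comparable_ltgtP => [cy|yc|cy]; first exact: le_lt_trans uc cy.
  by rewrite comparable_sym (lt_comparable (lt_trans yc (covers_lt cx))) in xy.
by rewrite -cy comparable_sym (lt_comparable (covers_lt cx)) in xy.
Qed.

Lemma saturated_down_eq (x y : T) : ~~ (x >=< y)%O -> down x = down y.
Proof.
move=> xy; apply/setP => u; rewrite !inE.
by apply/idP/idP; apply: incomparable_lt; rewrite // comparable_sym.
Qed.

Lemma rank_level (x : T) : rho x = ((odd (level x))%:Z)%R.
Proof.
have [n] := ubnP (level x); elim: n x => // n IH x /ltnSE lx.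
case: (posnP (level x)) => [l0|].
  by rewrite l0 rank_min // -level_eq0 l0.
case/(level_pred saturated_down_eq) => c cx lc.
rewrite (rank_cover_flip cx) lc (IH c) /=; last by rewrite lc in lx.
by case: odd.
Qed.

End CanonicalSaturated.

(* The antichains are the fibres A_i = f^-1(i), i = 0..k. *)
Theorem proposition3p4 (d : Order.disp_t) (T : finPOrderType d)
    (w : T -> nat) (rho : T -> int) :
  labeling w ->
  consistent w ->
  canonical_with_rank w rho ->
  saturated rho ->
  exists (k : nat) (f : T -> nat),
    (forall x, (f x <= k)%N) /\
    ((0 < #|T|)%N -> forall i, (i <= k)%N -> exists x, f x = i) /\
    (forall x y : T, (x < y)%O <-> (f x < f y)%N) /\
    (forall x y : T, covers x y ->
       eps w x y = (if odd (f x) then (-1)%R else 1%R)).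
Proof.
move=> _ _ [rank [rank01 _]] sat.
have weak := saturated_down_eq rank rank01 sat.
exists (\max_(x : T) level x), (@level _ T); split; [|split; [|split]].
- by move=> x; apply: leq_bigmax.
- move=> /(bigop.eq_bigmax (@level _ T)) [x ->] i; exact: level_surj.
- by move=> x y; rewrite (ltn_level weak).
- move=> x y xy; rewrite (eps_cover rank rank01 xy) (rank_level rank rank01 sat).
  by case: odd.
Qed.
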